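(* Let $P$ be an online abstract network design problem. Consider an instance of $P$ on a tree metric $(T,d_T)$ with request sequence $Z_1,\ldots,Z_r$, and let $T_i=T[\mathcal Z_i]$ be the subtree of $T$ induced by $\mathcal Z_i=Z_1\cup\cdots\cup Z_i$. Then for any feasible solution $\mathcal S=((R_1,C_1),\ldots,(R_r,C_r))$ there exists a feasible solution $\mathcal S'=((R'_1,C_1),\ldots,(R'_r,C_r))$ such that each $R'_i$ is contained in $T_i$ and $\mathrm{cost}(\mathcal S')\le\mathrm{cost}(\mathcal S)$.
   Context: Abstract network design: an instance consists of a graph (here the edge-weighted tree $T$ with lengths $d_T$) and online requests $Z_i$ of terminals; a solution is a sequence of responses $(R_i,C_i)$ with $R_i$ a set of edges and $C_i$ an ordered list of pairs from $\binom{\mathcal Z_i}{2}$. Given feasibility functions $\mathcal F_i$, the solution is feasible iff for each $i$, $\mathcal F_i(C_1,\ldots,C_i)=1$ and each pair of $C_j$ is connected in $R_j$ for all $j\le i$. Load function $\rho$ on subsets of time steps is subadditive, monotone increasing, and zero exactly on $\emptyset$; the cost is $\sum_{e}d_T(e)\rho(\{j: e\in R_j\})$. $T[\mathcal Z_i]$ is the minimal subtree of $T$ containing $\mathcal Z_i$. *)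

From mathcomp Require Import all_boot all_order all_algebra.
Set Implicit Arguments. Unset Strict Implicit. Unset Printing Implicit Defensive.
Import Order.TTheory GRing.Theory Num.Theory.
Local Open Scope ring_scope.

Section Defs.
Variable V : finType.

Definition edge_set_ok (E : {set {set V}}) : Prop :=
  forall e, e \in E -> #|e| = 2%N.

Definition connected_in (F : {set {set V}}) (u v : V) : bool :=
  connect (fun x y => [set x; y] \in F) u v.

Definition is_cycle (E : {set {set V}}) (v0 : V) (p : seq V) : bool :=
  [&& (2 <= size p)%N, uniq (v0 :: p),
      path (fun x y => [set x; y] \in E) v0 p &
      [set last v0 p; v0] \in E].

Definition is_tree (E : {set {set V}}) : Prop :=
  [/\ edge_set_ok E,
      (forall u v, connected_in E u v) &
      (forall v0 p, ~~ is_cycle E v0 p)].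

Definition subtree_containing (E : {set {set V}}) (Z : {set V})
    (F : {set {set V}}) : bool :=
  (F \subset E) &&
  [forall u in Z :|: \bigcup_(e in F) e,
     forall v in Z :|: \bigcup_(e in F) e, connected_in F u v].

(* edge set of T[Z], the minimal subtree of T containing Z
   (intersection of all subtrees containing Z) *)
Definition span_edges (E : {set {set V}}) (Z : {set V}) : {set {set V}} :=
  \bigcap_(F | subtree_containing E Z F) F.

End Defs.

Section Problem.
Variables (V : finType) (r : nat).

Definition cumZ (Z : 'I_r -> {set V}) (i : 'I_r) : {set V} :=
  \bigcup_(j : 'I_r | (j <= i)%N) Z j.

Definition prefixC (C : 'I_r -> seq (V * V)) (i : 'I_r) : seq (seq (V * V)) :=
  map C (take i.+1 (enum 'I_r)).

Definition feasible (E : {set {set V}}) (Z : 'I_r -> {set V})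
    (Feas : 'I_r -> seq (seq (V * V)) -> bool)
    (R : 'I_r -> {set {set V}}) (C : 'I_r -> seq (V * V)) : Prop :=
  (forall i, R i \subset E) /\
  (forall i p, p \in C i -> [/\ p.1 \in cumZ Z i, p.2 \in cumZ Z i & p.1 != p.2]) /\
  (forall i : 'I_r, Feas i (prefixC C i) /\
     forall j : 'I_r, (j <= i)%N -> forall p, p \in C j -> connected_in (R j) p.1 p.2).

Definition load_function (R : numDomainType) (rho : {set 'I_r} -> R) : Prop :=
  [/\ (forall A B, rho (A :|: B) <= rho A + rho B),
      (forall A B : {set 'I_r}, A \subset B -> rho A <= rho B) &
      (forall A, rho A = 0 <-> A = set0)].

Definition cost (R : numDomainType) (E : {set {set V}}) (d : {set V} -> R)
    (rho : {set 'I_r} -> R) (Rs : 'I_r -> {set {set V}}) : R :=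
  \sum_(e in E) d e * rho [set j | e \in Rs j].

End Problem.

(* Take R'_i = R_i ∩ T_i.  In a tree the simple path joining two vertices
   uses only edges of every connected edge set containing both of them
   (otherwise deleting one of its edges would leave its endpoints connected,
   closing a cycle).  Hence a pair of C_j, whose ends lie in Z_1 ∪ ... ∪ Z_j,
   is joined by a simple path of R_j that lies in T_j, so it stays connected
   in R'_j.  Shrinking the R_i only shrinks the load sets, and rho is
   monotone, so the cost does not increase. *)

From mathcomp Require Import all_boot all_order all_algebra.
Import Order.TTheory GRing.Theory Num.Theory.
Local Open Scope ring_scope.

Set Implicit Arguments.
Unset Strict Implicit.
Unset Printing Implicit Defensive.

Section TreePaths.
Variable V : finType.
Implicit Types (E F G : {set {set V}}) (Z : {set V}).

Definition edge_rel F : rel V := fun x y => [set x; y] \in F.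

Lemma edge_rel_sym F : symmetric (edge_rel F).
Proof. by move=> x y; rewrite /edge_rel setUC. Qed.

Lemma connected_in_sym F x y : connected_in F x y = connected_in F y x.
Proof. exact: (sym_connect_sym (edge_rel_sym F)). Qed.

Lemma sub_connected_in F G x y :
  F \subset G -> connected_in F x y -> connected_in G x y.
Proof.
by move=> sFG; apply: connect_sub => a b ab; apply/connect1/(subsetP sFG).
Qed.

Lemma path_edge_relI F G x p :
  path (edge_rel (F :&: G)) x p =
  path (edge_rel F) x p && path (edge_rel G) x p.
Proof. by rewrite -path_relI; apply: eq_path => a b; rewrite /edge_rel inE. Qed.

Lemma path_edge_rel_bigcap (P : pred {set {set V}}) x p :
  (forall G, P G -> path (edge_rel G) x p) ->
  path (edge_rel (\bigcap_(G | P G) G)) x p.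
Proof.
elim: p x => //= y p IHp x pathG; apply/andP; split.
  by apply/bigcapP => G /pathG /andP[].
by apply: IHp => G /pathG /andP[].
Qed.

Lemma path_edge_relD1 F (e : {set V}) u x p : u \in e -> u \notin x :: p ->
  path (edge_rel F) x p -> path (edge_rel (F :\ e)) x p.
Proof.
move=> ue; elim: p x => //= y p IHp x; rewrite !inE !negb_or.
case/and3P=> ux uy up /andP[xyF yp]; rewrite IHp ?inE ?negb_or ?uy //.
rewrite /edge_rel !inE [_ \in F]xyF !andbT; apply: contra ux => /eqP exy.
by move: ue; rewrite -exy !inE (negbTE uy) orbF.
Qed.

Lemma tree_edge_cut E a b : is_tree E -> [set a; b] \in E ->
  ~~ connected_in (E :\ [set a; b]) a b.
Proof.
case=> edgesE _ acyclicE abE.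
apply/negP => /connectP[p0 /shortenP[p pathp uniqp _]].
have neq_ab : a != b.
  by apply/eqP => eab; move: (edgesE _ abE); rewrite eab setUid cards1.
have pathE : path (edge_rel E) a p by apply: sub_path pathp => u v /setD1P[].
case: p pathp uniqp pathE => [|x [|y q]] pathp uniqp pathE.
- by move=> eab; rewrite eab eqxx in neq_ab.
- by move=> /= bx; move: pathp; rewrite /= -bx !inE eqxx.
move=> eb; apply/negP: (acyclicE a [:: x, y & q]).
by rewrite /is_cycle uniqp pathE -eb setUC abE.
Qed.

Variable E : {set {set V}}.
Hypothesis treeE : is_tree E.

Lemma tree_first_edge_in F u x p : F \subset E ->
  uniq [:: u, x & p] -> path (edge_rel E) x p -> [set u; x] \in E ->
  connected_in F u (last x p) -> [set u; x] \in F.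
Proof.
move=> sFE uniq_uxp xp uxE conn_F; apply: contraT => uxNF.
have sF : F \subset E :\ [set u; x].
  apply/subsetP => f fF; rewrite !inE (subsetP sFE) // andbT.
  by apply: contraNneq uxNF => <-.
have conn_u : connected_in (E :\ [set u; x]) u (last x p).
  exact: sub_connected_in conn_F.
have conn_x : connected_in (E :\ [set u; x]) x (last x p).
  apply/connectP; exists p => //.
  apply: (path_edge_relD1 (u := u) _ _ xp); first by rewrite !inE eqxx.
  by case/andP: uniq_uxp.
have := tree_edge_cut treeE uxE; rewrite connected_in_sym in conn_x.
by rewrite /connected_in (connect_trans conn_u conn_x).
Qed.

Lemma tree_uniq_path_in F u p : F \subset E ->
  uniq (u :: p) -> path (edge_rel E) u p -> connected_in F u (last u p) ->
  path (edge_rel F) u p.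
Proof.
move=> sFE; elim: p u => //= x p IHp u uniq_uxp /andP[uxE xp] conn_F.
have uxF := tree_first_edge_in sFE uniq_uxp xp uxE conn_F.
rewrite /edge_rel uxF IHp //; first by case/andP: uniq_uxp.
by apply: connect_trans conn_F; apply: connect1; rewrite /edge_rel setUC.
Qed.

Lemma connected_in_span_edges F Z u v : F \subset E -> u \in Z -> v \in Z ->
  connected_in F u v -> connected_in (F :&: span_edges E Z) u v.
Proof.
move=> sFE uZ vZ /connectP[p0 /shortenP[p pathFp uniqp _] v_last].
apply/connectP; exists p => //; rewrite path_edge_relI pathFp /=.
apply: path_edge_rel_bigcap => G /andP[sGE /forall_inP conn_G].
apply: tree_uniq_path_in sGE uniqp (sub_path _ pathFp) _.
  by move=> a b; apply: (subsetP sFE).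
by apply/(forall_inP (conn_G u _)); rewrite inE -?v_last ?uZ ?vZ.
Qed.

End TreePaths.

Lemma feasible_setI_span_edges (V : finType) (r : nat) (E : {set {set V}})
    (Z : 'I_r -> {set V}) Feas Rs C :
  is_tree E -> feasible E Z Feas Rs C ->
  feasible E Z Feas (fun i => Rs i :&: span_edges E (cumZ Z i)) C.
Proof.
move=> treeE [sRE [C_ok feasRs]].
split; first by move=> i; rewrite subIset ?sRE.
split=> // i; have [Feas_i conn_i] := feasRs i; split=> // j le_ji q qC.
have [q1Z q2Z _] := C_ok j q qC.
exact: (connected_in_span_edges treeE (sRE j) q1Z q2Z (conn_i j le_ji q qC)).
Qed.

Lemma ler_cost (R : numDomainType) (V : finType) (r : nat) (E : {set {set V}})
    (d : {set V} -> R) (rho : {set 'I_r} -> R)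
    (Rs Rs' : 'I_r -> {set {set V}}) :
  (forall e, e \in E -> 0 <= d e) ->
  (forall A B : {set 'I_r}, A \subset B -> rho A <= rho B) ->
  (forall i, Rs' i \subset Rs i) ->
  cost E d rho Rs' <= cost E d rho Rs.
Proof.
move=> d_ge0 rho_mono sRs; apply: ler_sum => e eE.
rewrite ler_wpM2l ?d_ge0 ?rho_mono //.
by apply/subsetP => j; rewrite !inE; apply: (subsetP (sRs j)).
Qed.

Theorem proposition3p3 (R : realFieldType) (V : finType) (E : {set {set V}})
  (d : {set V} -> R) (r : nat) (Z : 'I_r -> {set V})
  (Feas : 'I_r -> seq (seq (V * V)) -> bool) (rho : {set 'I_r} -> R)
  (Rs : 'I_r -> {set {set V}}) (C : 'I_r -> seq (V * V)) :
  is_tree E ->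
  (forall e, e \in E -> 0 < d e) ->
  load_function rho ->
  feasible E Z Feas Rs C ->
  exists Rs' : 'I_r -> {set {set V}},
    [/\ feasible E Z Feas Rs' C,
        (forall i, Rs' i \subset span_edges E (cumZ Z i)) &
        cost E d rho Rs' <= cost E d rho Rs].
Proof.
move=> treeE d_gt0 [_ rho_mono _] feasRs.
exists (fun i => Rs i :&: span_edges E (cumZ Z i)); split.
- exact: feasible_setI_span_edges.
- by move=> i; apply: subsetIr.
- apply: ler_cost rho_mono _ => [e /d_gt0/ltW // | i]; exact: subsetIl.
Qed.
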